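(* Let $G$ be a finite graph, let $C$ be a proper coloring of $G$ with exactly $\chi(G)$ colors, and let $C_1$ be one color class of $C$. Let $\mathcal{G}\le \mathrm{Aut}(G)$ be the subgroup of all automorphisms $A$ with $A(C_1)=C_1$ (setwise), and assume $|\mathcal{G}|\ge 2$; let $r$ be the least prime dividing $|\mathcal{G}|$. For $A\in\mathcal{G}$ let $\theta_A$ be the number of distinct orbits of the cyclic group $\langle A\rangle$ on $C_1$. If for some integer $t\ge 2$ $$\sum_{A\in\mathcal{G}} t^{\theta_A-|C_1|}<r,$$ then $\chi_D(G)\le \chi(G)+t-1$. In particular, with $F(C_1):=\max_{A\in\mathcal{G},\,A\neq I}|\{v\in C_1: A(v)=v\}|$, if $F(C_1)<|C_1|-2\log_t|\mathcal{G}|$ for some integer $t\ge2$, then $\chi_D(G)\le\chi(G)+t-1$.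
   Context: For a graph $G$, a coloring of $V(G)$ is distinguishing if the only automorphism of $G$ that maps every color class onto itself (setwise) is the identity. The distinguishing chromatic number $\chi_D(G)$ is the minimum number of colors in a coloring of $G$ that is both proper and distinguishing. $\chi(G)$ is the chromatic number. *)

From Stdlib Require Import Reals.
From HB Require Import structures.
From mathcomp Require Import all_boot all_order all_algebra all_fingroup.
Set Implicit Arguments. Unset Strict Implicit. Unset Printing Implicit Defensive.
Import GRing.Theory Num.Theory.

Section GraphDefs.
Variable T : finType.
Variable e : rel T.   (* a finite simple graph: symmetric irreflexive relation *)

Definition proper_col (k : nat) (c : T -> 'I_k) : bool :=
  [forall x, forall y, e x y ==> (c x != c y)].

Definition color_class (k : nat) (c : T -> 'I_k) (i : 'I_k) : {set T} :=
  [set x | c x == i].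

Definition is_aut (f : {perm T}) : bool :=
  [forall x, forall y, e (f x) (f y) == e x y].

Definition Aut : {set {perm T}} := [set f | is_aut f].

Definition distinguishing (k : nat) (c : T -> 'I_k) : bool :=
  [forall f : {perm T},
     (is_aut f && [forall i : 'I_k, f @: color_class c i == color_class c i])
       ==> (f == 1%g)].

Definition has_proper_col (k : nat) : bool :=
  [exists c : {ffun T -> 'I_k}, proper_col c].

Definition has_pd_col (k : nat) : bool :=
  [exists c : {ffun T -> 'I_k}, proper_col c && distinguishing c].

(* chromatic number: least k admitting a proper k-coloring
   (for a loopless graph k = #|T| always works, so the bound is attained) *)
Definition chi : nat :=
  \big[minn/#|T|]_(k < #|T|.+1 | has_proper_col k) (k : nat).

Definition chiD : nat :=
  \big[minn/#|T|]_(k < #|T|.+1 | has_pd_col k) (k : nat).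

Definition stab_aut (C1 : {set T}) : {set {perm T}} :=
  [set A in Aut | A @: C1 == C1].

Definition theta (A : {perm T}) (C1 : {set T}) : nat :=
  #|[set orbit 'P <[A]> x | x in C1]|.

Definition Ffix (C1 : {set T}) : nat :=
  \max_(A in stab_aut C1 :\ 1%g) #|[set v in C1 | A v == v]|.

End GraphDefs.

From Stdlib Require Import Reals Lra.
From HB Require Import structures.
From mathcomp Require Import all_boot all_order all_algebra all_fingroup.
From mathcomp Require Import zify.
Import Order.TTheory GRing.Theory Num.Theory.
Set Implicit Arguments. Unset Strict Implicit. Unset Printing Implicit Defensive.

(** Colour [C1] with [t] extra colours by some [g].  The automorphisms in [G] that
    preserve [g] on [C1] form a subgroup of [G], which is trivial as soon as its
    order is below the least prime divisor [r] of [|G|].  Double counting pairs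
    [(g, A)] with [g] constant on the [<A>]-orbits of [C1] shows that the average
    order of these subgroups is at most [sum_A t^(theta_A - |C1|) < r], so some [g]
    has a trivial stabiliser.  Splitting the colour class [C1] according to [g]
    (keeping the old colour where [g] is 0 and using [t - 1] fresh colours
    elsewhere) then gives a proper distinguishing colouring with [chi + t - 1]
    colours.  For the corollary, a non-identity [A] satisfies
    [2 theta_A <= |C1| + F(C1)], so each of its terms is at most [1/|G|] and the
    whole sum is below [2 <= r]. *)

Lemma card_blockwise_ffun (T R : finType) (P : {set {set T}}) (D : {set T}) :
  partition P D ->
  #|[set g : {ffun T -> R} | [forall B in P, forall x in B, forall y in B, g x == g y]]|
    <= #|R| ^ #|P| * #|R| ^ #|~: D|.
Proof.
case/and3P => /eqP covP _ nzP.
pose code (g : {ffun T -> R}) :=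
  ([ffun B : {set T} => if B \in P then omap g [pick x in B] else None],
   [ffun x => if x \in D then None else Some (g x)]).
set W := [set g | _]; rewrite -(card_in_imset (f := code)); last first.
  move=> g1 g2; rewrite !inE => /forall_inP g1P /forall_inP g2P [eq1 eq2].
  apply/ffunP => x; case: (boolP (x \in D)) => [Dx | nDx]; last first.
    by move/ffunP/(_ x): eq2; rewrite !ffunE (negbTE nDx) => -[].
  have [B PB Bx] : exists2 B, B \in P & x \in B by apply/bigcupP; rewrite -/(cover P) covP.
  move/ffunP/(_ B): eq1; rewrite !ffunE PB; case: pickP => [y By [eq_y] | /(_ x)].
    by rewrite (eqP (forall_inP (forall_inP (g1P B PB) x Bx) y By)) eq_y
               (eqP (forall_inP (forall_inP (g2P B PB) x Bx) y By)).
  by rewrite Bx.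
have card_Some : #|Some @: [set: R]| = #|R| by rewrite card_imset ?cardsT //; apply: Some_inj.
pose codes := setX [set f in pffun_on None P (Some @: [set: R])]
                   [set f in pffun_on None (~: D) (Some @: [set: R])].
apply: (@leq_trans #|codes|); last first.
  by rewrite /codes cardsX (cardsE (pffun_on None P _)) (cardsE (pffun_on None (~: D) _))
             !card_pffun_on card_Some.
apply: subset_leq_card; apply/subsetP => _ /imsetP[g _ ->]; rewrite !inE /=.
apply/andP; split; apply/pffun_onP; split.
- by apply/subsetP => B; rewrite !inE ffunE; case: ifP; rewrite ?eqxx.
- move=> _ /imageP[B PB ->]; rewrite ffunE PB.
  have [y By] : exists y, y \in B by apply/set0Pn; apply: contraNneq nzP => <-.
  case: pickP => [z _ | /(_ y)]; last by rewrite By.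
  by rewrite /= imset_f ?inE.
- by apply/subsetP => x; rewrite !inE ffunE; case: ifP; rewrite ?eqxx.
- move=> _ /imageP[x nDx ->]; rewrite ffunE; move: nDx; rewrite inE => /negbTE ->.
  by rewrite imset_f ?inE.
Qed.

Lemma small_subgroup_trivial (gT : finGroupType) (G H : {group gT}) :
  H \subset G -> #|H| < pdiv #|G| -> H :=: 1%g.
Proof.
move=> sHG ltH; apply: card_le1_trivg; rewrite leqNgt; apply: contraTN ltH => gt1H.
by rewrite -leqNgt pdiv_min_dvd ?cardSg.
Qed.

Lemma sum_card_setId_exchange (I J : finType) (D : {pred I}) (r : I -> J -> bool) :
  \sum_(j : J) #|[set i in D | r i j]| = \sum_(i in D) #|[set j | r i j]|.
Proof.
under eq_bigr => j _ do rewrite -sum1dep_card big_mkcondr /=.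
rewrite exchange_big /=; apply: eq_bigr => i _.
by rewrite -sum1dep_card [RHS]big_mkcond.
Qed.

Section CycleOrbits.
Variables (T : finType) (A : {perm T}) (S : {set T}).
Hypothesis AS : A @: S = S.

Lemma cycle_acts_stable : [acts <[A]>%g, on S | 'P].
Proof.
rewrite cycle_subG; apply/astabsP => x.
by rewrite /= apermE -{1}AS mem_imset //; apply: perm_inj.
Qed.

Lemma cycle_orbit_sub x : x \in S -> orbit 'P <[A]>%g x \subset S.
Proof. by rewrite (acts_sub_orbit _ cycle_acts_stable). Qed.

Lemma invariant_on_cycle_orbit (rT : Type) (g : T -> rT) :
  {in S, forall x, g (A x) = g x} ->
  {in S, forall x y, y \in orbit 'P <[A]>%g x -> g y = g x}.
Proof.
move=> gA x Sx _ /orbitP[_ /cycleP[n ->] <-]; rewrite /= apermE.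
elim: n => [|n IHn]; first by rewrite expg0 perm1.
rewrite expgSr permM gA ?IHn //.
by rewrite -apermE (acts_act cycle_acts_stable) ?mem_cycle.
Qed.

Lemma card_cycle_orbits_fixpoints :
  2 * #|orbit 'P <[A]>%g @: S| <= #|S| + #|[set x in S | A x == x]|.
Proof.
set O := orbit 'P <[A]>%g @: S; set F := [set x in S | A x == x].
have orbit_ge2 X : X \in O -> 2 <= #|X| + (X \subset F).
  case/imsetP => x Sx ->; case: (boolP (_ \subset F)) => [_ | /subsetPn[y xy]].
    by rewrite addn1 ltnS card_gt0; apply/set0Pn; exists x; apply: orbit_refl.
  rewrite inE (subsetP (cycle_orbit_sub Sx)) //= addn0 => Ay.
  have <- : #|[set y; A y]| = 2 by rewrite cards2 eq_sym Ay.
  apply/subset_leq_card/subsetP => z; rewrite !inE => /orP[] /eqP->//.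
  by have /orbit_eqP <- := xy; apply: (mem_orbit 'P y (cycle_id A)).
have fixed_orbits : #|[set X in O | X \subset F]| <= #|F|.
  apply: leq_trans (leq_imset_card (orbit 'P <[A]>%g) F).
  apply/subset_leq_card/subsetP => X; rewrite inE => /andP[/imsetP[x Sx ->] sXF].
  exact/imset_f/(subsetP sXF)/orbit_refl.
rewrite (card_partition (orbit_partition cycle_acts_stable)) -/O.
have le2 : \sum_(X in O) 2 <= \sum_(X in O) (#|X| + (X \subset F)) by apply: leq_sum.
rewrite sum_nat_const big_split /= mulnC in le2.
apply: leq_trans le2 _; rewrite leq_add2l; apply: leq_trans fixed_orbits.
by rewrite -sum1dep_card big_mkcondr /=; apply: leq_sum => X _; case: (X \subset F).
Qed.

Lemma card_cycle_invariant_ffun (R : finType) :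
  #|[set g : {ffun T -> R} | [forall x in S, g (A x) == g x]]|
    <= #|R| ^ #|orbit 'P <[A]>%g @: S| * #|R| ^ #|~: S|.
Proof.
apply: leq_trans (card_blockwise_ffun R (orbit_partition cycle_acts_stable)).
apply/subset_leq_card/subsetP => g; rewrite !inE => /forall_inP gA.
have gAeq : {in S, forall x, g (A x) = g x} by move=> x /gA/eqP.
apply/forall_inP => _ /imsetP[x Sx ->]; apply/forall_inP => y xy; apply/forall_inP => z xz.
by rewrite (invariant_on_cycle_orbit gAeq Sx xy) (invariant_on_cycle_orbit gAeq Sx xz).
Qed.

End CycleOrbits.

Section ColoringStabiliser.
Variables (T : finType) (e : rel T) (C1 : {set T}).

Lemma group_set_stab_aut : group_set (stab_aut e C1).
Proof.
apply/group_setP; split.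
  rewrite !inE (eq_imset _ (@perm1 T)) imset_id eqxx andbT.
  by apply/forallP => x; apply/forallP => y; rewrite !perm1.
move=> A B; rewrite !inE => /andP[autA /eqP AC1] /andP[autB /eqP BC1].
rewrite (eq_imset _ (permM A B)) imset_comp AC1 BC1 eqxx andbT.
apply/forallP => x; apply/forallP => y; rewrite !permM.
by rewrite (eqP (forallP (forallP autB _) _)) (eqP (forallP (forallP autA _) _)).
Qed.

Canonical stab_aut_group := group group_set_stab_aut.

Definition coloring_stab (R : eqType) (g : T -> R) : {set {perm T}} :=
  [set A in stab_aut e C1 | [forall x in C1, g (A x) == g x]].

Lemma group_set_coloring_stab (R : eqType) (g : T -> R) : group_set (coloring_stab g).
Proof.
apply/group_setP; split.
  by apply/setIdP; split; [exact: group1 | apply/forall_inP] => x _; rewrite perm1.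
move=> A B /setIdP[GA /forall_inP gA] /setIdP[GB /forall_inP gB].
apply/setIdP; split; first exact: groupM.
apply/forall_inP => x C1x; rewrite permM (eqP (gB _ _)) ?gA //.
by move: GA; rewrite inE => /andP[_ /eqP <-]; apply: imset_f.
Qed.

Canonical coloring_stab_group (R : eqType) (g : T -> R) := group (group_set_coloring_stab g).

Lemma exists_coloring_trivial_stab (R : finType) : 0 < #|R| ->
  \sum_(A in stab_aut e C1) #|R| ^ theta A C1 < pdiv #|stab_aut e C1| * #|R| ^ #|C1| ->
  exists g : {ffun T -> R}, coloring_stab g = 1%g.
Proof.
set G := stab_aut e C1 => R_gt0 small_sum.
suff [g lt_g] : exists g : {ffun T -> R}, #|coloring_stab g| < pdiv #|G|.
  by exists g; apply: small_subgroup_trivial lt_g; apply/subsetP => A; rewrite inE => /andP[].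
apply/existsP; apply: contraTT small_sum; rewrite negb_exists -leqNgt => /forallP ge_stab.
have m_gt0 : 0 < #|R| ^ #|~: C1| by rewrite expn_gt0 R_gt0.
rewrite -(leq_pmul2r m_gt0) -mulnA -expnD cardsC -card_ffun mulnC.
rewrite -sum_nat_const big_distrl /=.
have {}ge_stab (g : {ffun T -> R}) : pdiv #|G| <= #|coloring_stab g| by rewrite leqNgt ge_stab.
apply: (@leq_trans (\sum_(g : {ffun T -> R}) #|coloring_stab g|)); first exact: leq_sum.
rewrite sum_card_setId_exchange; apply: leq_sum => A; rewrite inE => /andP[_ /eqP AC1].
exact: card_cycle_invariant_ffun.
Qed.

End ColoringStabiliser.

Lemma perm_color_classesP (T : finType) (k : nat) (c : T -> 'I_k) (f : {perm T}) :
  reflect (forall x, c (f x) = c x) [forall j, f @: color_class c j == color_class c j].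
Proof.
apply: (iffP forallP) => [fc x | cf j].
  have /eqP class_fx := fc (c x).
  have := imset_f f (_ : x \in color_class c (c x)).
  by rewrite class_fx !inE => /(_ (eqxx _))/eqP.
rewrite eqEcard card_imset ?leqnn ?andbT; last exact: perm_inj.
by apply/subsetP => _ /imsetP[x Cx ->]; move: Cx; rewrite !inE cf.
Qed.

Section RefinedColoring.
Variables (T : finType) (e : rel T) (k t : nat) (c : T -> 'I_k) (i : 'I_k) (g : T -> 'I_t.+1).
Hypothesis c_proper : proper_col e c.

Definition refine_color x : nat := if (c x == i) && (0 < g x) then k + (g x).-1 else c x.

Lemma refine_color_lt x : refine_color x < k + t.
Proof.
rewrite /refine_color; case: ifP => [/andP[_ gx_gt0] | _]; last by rewrite ltn_addr.
by rewrite ltn_add2l -ltnS prednK.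
Qed.

Lemma refine_color_eq x y :
  refine_color x = refine_color y -> c x = c y /\ (c x = i -> g x = g y).
Proof.
move=> eq_rc; suff [cxy gxy] : (c x : nat) = c y /\ ((c x : nat) = i -> (g x : nat) = g y).
  by split=> [|cxi]; apply: val_inj; rewrite /= ?gxy ?cxi.
move: eq_rc; rewrite /refine_color -!val_eqE /=.
have := ltn_ord (c x); have := ltn_ord (c y); have := ltn_ord i.
case: (val (c x) =P val i); case: (val (c y) =P val i).
all: case: (posnP (g x)); case: (posnP (g y)) => /=; lia.
Qed.

Definition refined_coloring : {ffun T -> 'I_(k + t)} := [ffun x => Ordinal (refine_color_lt x)].

Lemma refined_coloring_eq x y :
  refined_coloring x = refined_coloring y -> c x = c y /\ (c x = i -> g x = g y).
Proof. by rewrite !ffunE => /(congr1 val)/refine_color_eq. Qed.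

Lemma proper_refined_coloring : proper_col e refined_coloring.
Proof.
apply/forallP => x; apply/forallP => y; apply/implyP => exy.
apply: contraTneq (forallP (forallP c_proper x) y) => /refined_coloring_eq[-> _].
by rewrite exy eqxx.
Qed.

Lemma distinguishing_refined_coloring :
  coloring_stab e (color_class c i) g = 1%g -> distinguishing e refined_coloring.
Proof.
move=> stab1; apply/forallP => f; apply/implyP => /andP[aut_f /perm_color_classesP f_refined].
have f_c x : c (f x) = c x by case: (refined_coloring_eq (f_refined x)).
suff : f \in coloring_stab e (color_class c i) g by rewrite stab1 inE.
rewrite !inE aut_f (forallP (introT (perm_color_classesP c f) f_c) i) /=.
apply/forall_inP => x; rewrite inE => /eqP cxi.
by have [_ ->] := refined_coloring_eq (f_refined x); rewrite ?f_c.
Qed.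

End RefinedColoring.

Lemma has_pd_col_refine (T : finType) (e : rel T) (k t : nat) (c : T -> 'I_k) (i : 'I_k)
    (g : T -> 'I_t.+1) :
  proper_col e c -> coloring_stab e (color_class c i) g = 1%g -> has_pd_col e (k + t).
Proof.
move=> c_proper stab1; apply/existsP; exists (refined_coloring c i g).
by rewrite proper_refined_coloring ?distinguishing_refined_coloring.
Qed.

Lemma chiD_le (T : finType) (e : rel T) (k : nat) : has_pd_col e k -> chiD e <= k.
Proof.
move=> pd_k; rewrite /chiD -minEnat; have [le_kT | lt_Tk] := leqP k #|T|.
  pose j : 'I_#|T|.+1 := Ordinal (le_kT : k < #|T|.+1).
  exact: (bigmin_le_cond #|T| (fun n : 'I_#|T|.+1 => n : nat) (pd_k : has_pd_col e j)).
have := bigmin_le_id (index_enum 'I_#|T|.+1) #|T| (has_pd_col e) (fun n : 'I_#|T|.+1 => n : nat).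
by move/leq_trans; apply; apply: ltnW.
Qed.

Lemma exprz_subn_mulr (R : fieldType) (x : R) (m n : nat) :
  x != 0%R -> (x ^ (Posz m - Posz n) * x ^+ n = x ^+ m)%R.
Proof. by move=> x_neq0; rewrite -[(x ^+ n)%R]/(x ^ Posz n)%R -expfzDr // subrK. Qed.

Lemma sum_exprz_subn_lt (I : finType) (D : {pred I}) (w : I -> nat) (t n r : nat) :
  0 < t -> (\sum_(i in D) (t%:R : rat) ^ (Posz (w i) - Posz n) < r%:R)%R ->
  \sum_(i in D) t ^ w i < r * t ^ n.
Proof.
move=> t_gt0; have t_pos : (0 < t%:R :> rat)%R by rewrite ltr0n.
rewrite -(ltr_pM2r (exprn_gt0 n t_pos)) mulr_suml.
rewrite (eq_bigr (fun i => ((t ^ w i)%:R : rat))) => [|i _]; last first.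
  by rewrite natrX exprz_subn_mulr ?lt0r_neq0.
by rewrite -natr_sum -natrX -natrM ltr_nat.
Qed.

Lemma sum_expn_lt_double (I : finType) (D : {set I}) (i0 : I) (w : I -> nat) (t n : nat) :
  0 < t -> i0 \in D -> w i0 <= n ->
  {in D, forall i, i != i0 -> #|D| * t ^ w i <= t ^ n} ->
  \sum_(i in D) t ^ w i < 2 * t ^ n.
Proof.
move=> t_gt0 Di0 w0_le small.
have D_gt0 : 0 < #|D| by apply/card_gt0P; exists i0.
have card_rest : #|[set i | (i \in D) && (i != i0)]| = #|D|.-1.
  by rewrite (cardsD1 i0 D) Di0 add1n /=; apply: eq_card => i; rewrite !inE andbC.
have rest : #|D| * \sum_(i in D | i != i0) t ^ w i <= #|D|.-1 * t ^ n.
  rewrite big_distrr /= -card_rest -sum_nat_cond_const.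
  by apply: leq_sum => i /andP[Di ii0]; apply: small.
have top : #|D| * t ^ w i0 <= #|D| * t ^ n by rewrite leq_mul2l leq_pexp2l ?orbT.
have tn_gt0 : 0 < t ^ n by rewrite expn_gt0 t_gt0.
rewrite -(ltn_pmul2l D_gt0) (bigD1 i0) //= mulnDr.
nia.
Qed.

Lemma leq_mul_expn_of_sq (m t th c f : nat) :
  0 < t -> 2 * th <= c + f -> m ^ 2 < t ^ (c - f) -> m * t ^ th <= t ^ c.
Proof.
move=> t_gt0 le_th lt_m2.
have lt_m : m < t ^ (c - th).
  rewrite -(ltn_exp2r _ _ (isT : 0 < 2)) -expnM; apply: leq_trans lt_m2 _.
  by rewrite leq_pexp2l //; lia.
have [le_th_c | lt_c_th] := leqP th c.
  by rewrite -(subnK le_th_c) expnD leq_mul2r ltnW ?orbT.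
by move: lt_m; rewrite (eqnP (ltnW lt_c_th)) expn0 ltnS leqn0 => /eqP ->.
Qed.

Lemma INR_expn (m n : nat) : INR (m ^ n) = pow (INR m) n.
Proof. by elim: n => [|n IHn]; rewrite ?expn0 // expnS -multE mult_INR IHn. Qed.

Lemma ln_INR_gt0 (n : nat) : 1 < n -> Rlt 0 (ln (INR n)).
Proof.
by move=> n_gt1; rewrite -ln_1; apply: ln_increasing; [lra | apply: (lt_INR 1); apply/ssrnat.ltP].
Qed.

Lemma sq_lt_expn_of_log (f c m t : nat) : 1 < t -> 1 < m ->
  Rlt (INR f) (Rminus (INR c) (Rmult (INR 2) (Rdiv (ln (INR m)) (ln (INR t))))) ->
  m ^ 2 < t ^ (c - f).
Proof.
move=> t_gt1 m_gt1 lt_f.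
have t_pos : Rlt 0 (INR t) by apply: lt_0_INR; apply/ssrnat.ltP; rewrite ltnW.
have m_pos : Rlt 0 (INR m) by apply: lt_0_INR; apply/ssrnat.ltP; rewrite ltnW.
have ln_t_pos := ln_INR_gt0 t_gt1.
have ratio_pos : Rlt 0 (Rdiv (ln (INR m)) (ln (INR t))).
  exact: Rdiv_lt_0_compat (ln_INR_gt0 m_gt1) ln_t_pos.
have lt_fc : f < c by apply/ssrnat.ltP; apply: INR_lt; simpl in lt_f; lra.
have log_lt : Rlt (Rmult 2 (ln (INR m))) (Rmult (INR (c - f)) (ln (INR t))).
  rewrite -minusE minus_INR; last by apply/ssrnat.leP; rewrite ltnW.
  have -> : Rmult 2 (ln (INR m)) = Rmult (Rmult 2 (Rdiv (ln (INR m)) (ln (INR t)))) (ln (INR t)).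
    by field; lra.
  by apply: Rmult_lt_compat_r => //; simpl in lt_f; lra.
apply/ssrnat.ltP; apply: INR_lt; rewrite !INR_expn.
by apply: ln_lt_inv; try apply: pow_lt => //; rewrite !ln_pow.
Qed.

Theorem mainTheorem1 (T : finType) (e : rel T)
  (e_sym : symmetric e) (e_irr : irreflexive e)
  (c : T -> 'I_(chi e)) (c_proper : proper_col e c) (i : 'I_(chi e)) :
  let C1 := color_class c i in
  let G := stab_aut e C1 in
  (2 <= #|G|)%N ->
  (forall t : nat, (2 <= t)%N ->
     (\sum_(A in G) ((t%:R : rat) ^ (Posz (theta A C1) - Posz #|C1|)) < (pdiv #|G|)%:R)%R ->
     (chiD e <= chi e + t - 1)%N)
  /\
  (forall t : nat, (2 <= t)%N ->
     Rlt (INR (Ffix e C1))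
        (Rminus (INR #|C1|) (Rmult (INR 2) (Rdiv (ln (INR #|G|)) (ln (INR t))))) ->
     (chiD e <= chi e + t - 1)%N).
Proof.
move=> C1 G G_ge2.
have chiD_bound t : 1 < t -> \sum_(A in G) t ^ theta A C1 < pdiv #|G| * t ^ #|C1| ->
    chiD e <= chi e + t - 1.
  case: t => [|t] // _ small_sum.
  have [g stab1] : exists g : {ffun T -> 'I_t.+1}, coloring_stab e C1 g = 1%g.
    by apply: exists_coloring_trivial_stab; rewrite card_ord.
  by rewrite addnS subn1; apply: chiD_le; apply: has_pd_col_refine c_proper stab1.
split=> t t_ge2 hyp; apply: chiD_bound => //; first exact: sum_exprz_subn_lt (ltnW t_ge2) hyp.
have G_sq := sq_lt_expn_of_log t_ge2 G_ge2 hyp.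
apply: leq_trans (sum_expn_lt_double (i0 := 1%g) _ _ _ _) _.
- exact: ltnW.
- exact: group1.
- exact: leq_imset_card.
- move=> A GA ntA; apply: leq_mul_expn_of_sq (ltnW t_ge2) _ G_sq.
  have /setIdP[_ /eqP AC1] := GA.
  apply: leq_trans (card_cycle_orbits_fixpoints AC1) _; rewrite leq_add2l.
  by rewrite /Ffix; apply: leq_bigmax_cond; rewrite in_setD1 ntA GA.
- by rewrite leq_mul2r prime_gt1 ?pdiv_prime ?orbT.
Qed.
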